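(* Let $G=(V,E)$ be a finite chordal graph. Then for every integer $r\ge 1$, \[ \sum_{\substack{I\in\mathscr{C}(G)\\ |I|\le 2r}} (-1)^{|I|-1} \;\le\; c(G), \] with equality whenever $r\ge |V|/2$.
   Context: A graph is chordal if it contains no cycle of length four or more as an induced subgraph. $\mathscr{C}(G)$ denotes the clique complex of $G$: the set of all non-empty subsets $I\subseteq V$ whose elements are pairwise adjacent in $G$. $c(G)$ denotes the number of connected components of $G$. *)

(* A finite simple graph G = (V,E) is a finType T with a
   symmetric irreflexive adjacency relation e : rel T. *)
From HB Require Import structures.
From mathcomp Require Import all_boot all_order all_algebra.
Set Implicit Arguments. Unset Strict Implicit. Unset Printing Implicit Defensive.

Definition induced_cycle (T : finType) (e : rel T) (k : nat) (f : 'I_k -> T) :=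
  injective f /\
  forall i j : 'I_k,
    e (f i) (f j) = (val j == (val i).+1 %% k) || (val i == (val j).+1 %% k).

Definition chordal (T : finType) (e : rel T) :=
  forall (k : nat) (f : 'I_k -> T), 4 <= k -> ~ induced_cycle e f.

Definition is_clique (T : finType) (e : rel T) (I : {set T}) : bool :=
  (I != set0) && [forall x in I, forall y in I, (x != y) ==> e x y].

Definition ncomp (T : finType) (e : rel T) : nat := n_comp e T.

Definition clique_sum (T : finType) (e : rel T) (m : nat) : int :=
  (\sum_(I : {set T} | is_clique e I && (#|I| <= m)%N) (-1) ^+ (#|I|).-1)%R.

From HB Require Import structures.
From mathcomp Require Import all_boot all_order all_algebra zify.
Import GRing.Theory Num.Theory.
Set Implicit Arguments. Unset Strict Implicit. Unset Printing Implicit Defensive.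

(* Every induced subgraph of a chordal graph has a simplicial vertex, one whose
   neighbourhood is a clique.  Deleting a simplicial vertex w of degree d lowers the
   number of components by [d == 0].  The cliques through w are the w |: J with J a
   set of neighbours, so the truncated clique sum drops by sum_(j < m) (-1)^j C(d, j),
   which is 1 when d = 0 and (-1)^(m-1) C(d-1, m-1) when d > 0.  Hence, for even m,
   deleting w can only increase (clique sum - components), and leaves it unchanged
   when d < m; induction on the vertex set gives the inequality and the equality. *)

Lemma nth_cat_take_drop (T : Type) (x0 : T) (q : seq T) k j i :
  k <= j -> j <= size q ->
  nth x0 (take k q ++ drop j q) i = nth x0 q (if i < k then i else i + (j - k)).
Proof.
move=> le_kj le_jq; rewrite nth_cat size_takel; last by lia.
by case: ltnP => ik; rewrite ?nth_take // nth_drop; congr nth; lia.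
Qed.

Lemma sum_sign_subsets_leq (R : pzRingType) (T : finType) (N : {set T}) n :
  (\sum_(J : {set T} | (J \subset N) && (#|J| <= n)%N) (-1) ^+ #|J|
     = \sum_(j < n.+1) (-1) ^+ j *+ 'C(#|N|, j) :> R)%R.
Proof.
have sum_eq k : (\sum_(J : {set T} | (J \subset N) && (#|J| == k)) (-1) ^+ #|J|
                  = (-1) ^+ k *+ 'C(#|N|, k) :> R)%R.
  rewrite -cards_draws -sumr_const; apply: eq_big => [J | J /andP[_ /eqP ->] //].
  by rewrite inE.
elim: n => [|n IH]; first by rewrite big_ord1 -sum_eq; apply: eq_bigl => J; rewrite leqn0.
rewrite big_ord_recr /= -IH -sum_eq (bigID (fun J : {set T} => #|J| <= n)) /=.
by congr (_ + _)%R; apply: eq_bigl => J; rewrite -andbA; case: (_ \subset _) => //=; lia.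
Qed.

Lemma alternating_binomial_partial_sum (R : pzRingType) d n :
  (\sum_(j < n.+1) (-1) ^+ j *+ 'C(d.+1, j) = (-1) ^+ n *+ 'C(d, n) :> R)%R.
Proof.
elim: n => [|n IH]; first by rewrite big_ord1 !bin0.
by rewrite big_ord_recr /= IH binS mulrnDr exprS mulN1r mulNrn addrCA mulNrn subrr addr0.
Qed.

Section Detours.

Variables (T : eqType) (e : rel T) (x0 : T).
Implicit Types (a b : T) (q : seq T).

Definition detour (D : pred T) a b q :=
  [/\ 1 < size q, nth x0 q 0 = a, nth x0 q (size q).-1 = b, sorted e q
    & forall i, 0 < i -> i.+1 < size q -> D (nth x0 q i)].

Definition chordless q :=
  forall i j, i.+1 < j -> j < size q -> ~~ e (nth x0 q i) (nth x0 q j).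

Variables (D : pred T) (a b : T).
Hypothesis nab : ~~ e a b.

Lemma detour_shortcut q k j : detour D a b q ->
  0 < k <= j -> j < size q -> e (nth x0 q k.-1) (nth x0 q j) ->
  detour D a b (take k q ++ drop j q).
Proof.
move=> [q_gt1 qa qb /(sortedP x0) q_walk qD] /andP[k_gt0 le_kj] lt_jq e_kj.
have size_q' : size (take k q ++ drop j q) = k + (size q - j).
  by rewrite size_cat size_takel ?size_drop //; lia.
have nthE i := @nth_cat_take_drop _ x0 q k j i le_kj (ltnW lt_jq).
split; rewrite ?size_q'.
- case: (ltnP 1 (k + (size q - j))) => // short.
  have [k1 j_last] : k = 1 /\ j = (size q).-1 by lia.
  by move: e_kj nab; rewrite k1 j_last qa qb => ->.
- by rewrite nthE k_gt0.
- by rewrite nthE -qb; case: ltnP => ?; congr nth; lia.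
- apply/(sortedP x0) => i; rewrite size_q' => lt_i; rewrite !nthE.
  case: (ltnP i.+1 k) => [lt_ik | le_ki]; first by rewrite ltnW // q_walk //; lia.
  case: (ltnP i k) => [lt_ik | le_ik].
    have -> : i = k.-1 by lia.
    by rewrite prednK // subnKC.
  by rewrite addSn q_walk //; lia.
- by move=> i i_gt0 lt_i; rewrite nthE; case: ltnP => ?; apply: qD; lia.
Qed.

Lemma exists_chordless_detour q : a != b -> detour D a b q ->
  exists q', [/\ detour D a b q', uniq q' & chordless q'].
Proof.
move=> neq_ab; elim: {q}(size q).+1 {-2}q (ltnSn (size q)) => // n IH q lt_qn det_q.
have shorter k j : 0 < k <= j -> j < size q -> k + (size q - j) < size q ->
    e (nth x0 q k.-1) (nth x0 q j) -> exists q', [/\ detour D a b q', uniq q' & chordless q'].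
  move=> le_kj lt_jq lt_size e_kj; apply: (IH (take k q ++ drop j q)); last exact: detour_shortcut.
  by rewrite size_cat size_takel ?size_drop; lia.
have [q_gt1 qa qb /(sortedP x0) q_walk _] := det_q.
have [uniq_q | /(uniqPn x0)[i [j [lt_ij lt_jq eq_ij]]]] := boolP (uniq q); last first.
  case: (ltnP j.+1 (size q)) => [lt_j1q | j_last].
    by apply: (shorter i.+1 j.+1); rewrite ?eq_ij ?q_walk //; lia.
  have i_gt0 : 0 < i.
    case: i lt_ij eq_ij => // _ eq_0j; have j_last' : j = (size q).-1 by lia.
    by move: neq_ab; rewrite -qa -qb eq_0j j_last' eqxx.
  by apply: (shorter i j); rewrite -?eq_ij -?[in nth x0 q i](prednK i_gt0) ?q_walk //; lia.
pose chord := [pred ij : 'I_(size q) * 'I_(size q) |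
                (ij.1.+1 < ij.2) && e (nth x0 q ij.1) (nth x0 q ij.2)].
have [[i j] /andP[/= lt_ij e_ij] | no_chord] := pickP chord.
  by apply: (shorter i.+1 j); rewrite ?ltn_ord //=; have := ltn_ord j; lia.
exists q; split=> // i j lt_ij lt_jq; apply/negP => e_ij.
have := no_chord (Ordinal (ltn_trans (ltnSn i) (ltn_trans lt_ij lt_jq)), Ordinal lt_jq).
by rewrite /= lt_ij e_ij.
Qed.

Lemma path_detour c p : e a c -> path e c p -> e (last c p) b -> all D (c :: p) ->
  detour D a b (a :: rcons (c :: p) b).
Proof.
move=> ac cp pb /allP Dp; split=> /=.
- by rewrite size_rcons.
- by [].
- by rewrite size_rcons -rcons_cons nth_rcons ltnn eqxx.
- by rewrite ac rcons_path cp.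
- move=> [//|i] _ /=; rewrite size_rcons !ltnS -rcons_cons nth_rcons => le_ip.
  by rewrite ifT //; apply/Dp/mem_nth.
Qed.

End Detours.

Section Graph.

Variables (T : finType) (e : rel T).
Hypotheses (e_sym : symmetric e) (e_irr : irreflexive e).
Implicit Types (S A B I J K : {set T}) (u v w x y z : T).

Definition induced (S : {set T}) : rel T := [rel u v | [&& u \in S, v \in S & e u v]].

Definition nbhd (S : {set T}) (w : T) : {set T} := [set z in S | e w z].

Definition complete (A : {set T}) := {in A &, forall u v, u != v -> e u v}.

Lemma induced_sym S : symmetric (induced S).
Proof. by move=> u v; rewrite /induced /= andbCA e_sym. Qed.

Lemma connect_induced_mem S u v : connect (induced S) u v -> u \in S -> v \in S.
Proof.
have S_closed : closed (induced S) S by move=> a b /and3P[-> ->].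
by move=> /(closed_connect S_closed) ->.
Qed.

Lemma complete_sub (A B : {set T}) : A \subset B -> complete B -> complete A.
Proof. by move=> /subsetP sAB cB u v /sAB uB /sAB; apply: cB. Qed.

Lemma complete_setU1 x (A : {set T}) : complete A -> {in A, forall v, e x v} -> complete (x |: A).
Proof.
move=> cA xA u v; rewrite !in_setU1 => /predU1P[-> | uA] /predU1P[-> | vA].
- by rewrite eqxx.
- by move=> _; apply: xA.
- by rewrite e_sym => _; apply: xA.
- exact: cA.
Qed.

Lemma induced_cycle_nth x0 (s : seq T) : 1 < size s -> uniq s ->
  (forall i j, i < j < size s ->
     e (nth x0 s i) (nth x0 s j) = (j == i.+1) || (i == 0) && (j == (size s).-1)) ->
  induced_cycle e (fun i : 'I_(size s) => nth x0 s i).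
Proof.
move=> s_gt1 uniq_s adj; split=> [i j /eqP|].
  by rewrite nth_uniq // => /eqP/val_inj.
suff le_adj (i j : 'I_(size s)) : i <= j -> e (nth x0 s i) (nth x0 s j) =
    (val j == (val i).+1 %% size s) || (val i == (val j).+1 %% size s).
  by move=> i j; case: (leqP i j) => [/le_adj // | /ltnW/le_adj]; rewrite e_sym orbC.
case: i j => [i lt_is] [j lt_js] /= le_ij.
have j1E : j.+1 %% size s = if j.+1 == size s then 0 else j.+1.
  by case: ifP => [/eqP <-|neq]; rewrite ?modnn // modn_small //; lia.
have [-> | neq_ij] := eqVneq i j; first by rewrite e_irr j1E; case: ifP; lia.
rewrite adj; last by lia.
rewrite j1E modn_small; last by lia.
by case: ifP; lia.
Qed.

Hypothesis e_chordal : chordal e.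

Lemma no_detour_between_neighbours x a b q : a != b -> ~~ e a b -> e x a -> e x b ->
  ~ detour e x (fun z => (z != x) && ~~ e x z) a b q.
Proof.
move=> neq_ab nab xa xb det_q.
have [p [[p_gt1 pa pb /(sortedP x) p_walk pD] uniq_p chordless_p]] :=
  exists_chordless_detour nab neq_ab det_q.
have p_gt2 : 2 < size p.
  case: ltnP => // p_le2; have p2 : size p = 2 by lia.
  by move: (p_walk 0) nab; rewrite p2 -pa -pb p2 => ->.
have x_notin_p : x \notin p.
  apply/(nthP x) => -[i lt_ip pi_x].
  case: (posnP i) => [i0 | i_gt0]; first by move: xa; rewrite -pa -i0 pi_x e_irr.
  case: (ltnP i.+1 (size p)) => [lt_i1p | i_last].
    by move: (pD i i_gt0 lt_i1p); rewrite pi_x eqxx.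
  by move: xb; rewrite -pb (_ : (size p).-1 = i) ?pi_x ?e_irr //; lia.
apply: (e_chordal (f := fun i : 'I_(size (x :: p)) => nth x (x :: p) i)); first exact: p_gt2.
apply: induced_cycle_nth => /= [|| [|i] [|j] lt_ij] //=; first exact: ltnW.
  by rewrite x_notin_p.
all: set n := size p in lt_ij p_gt1 pb p_walk pD chordless_p p_gt2 *.
- case: (posnP j) => [-> | j_gt0]; first by rewrite pa xa.
  case: (ltnP j.+1 n) => [lt_j1p | j_last].
    by case/andP: (pD j j_gt0 lt_j1p) => _ /negbTE ->; lia.
  by rewrite (_ : j = n.-1) ?pb ?xb; lia.
- case: (eqVneq j i.+1) => [-> | neq_j]; first by rewrite p_walk ?eqxx //; lia.
  by rewrite (negbTE (chordless_p _ _ _ _)); lia.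
Qed.

Section Separator.

Variables (S : {set T}) (x y : T).
Let D := S :\: (x |: nbhd S x).
Let C := [set z | connect (induced D) y z].
Let M := [set z in S :\: C | [exists c in C, e c z]].
Hypothesis yD : y \in D.

Lemma in_far z : (z \in D) = [&& z \in S, z != x & ~~ e x z].
Proof. by rewrite !inE; case: (z \in S); case: (z == x); case: (e x z). Qed.

Lemma far_component_sub : C \subset D.
Proof. by apply/subsetP => z; rewrite inE => /connect_induced_mem; apply. Qed.

Lemma far_component_nbhd c : c \in C -> nbhd S c \subset C :|: M.
Proof.
move=> cC; apply/subsetP => z; rewrite !inE => /andP[zS cz].
by case: connect; rewrite //= zS; apply/existsP; exists c; rewrite cC.
Qed.

Lemma separator_sub_nbhd : M \subset nbhd S x.
Proof.
apply/subsetP => z; rewrite !inE => /andP[/andP[zC zS] /existsP[c /andP[cC cz]]].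
rewrite zS /=; apply: contraR zC => nxz.
have cD := subsetP far_component_sub c cC.
have zD : z \in D.
  rewrite in_far zS nxz andbT /=; apply: contraTneq cD => zx.
  by rewrite in_far e_sym -zx cz !andbF.
rewrite inE in cC; apply: connect_trans cC (connect1 _).
by rewrite /induced /= cD zD.
Qed.

Lemma separator_complete : complete M.
Proof.
move=> m1 m2 m1M m2M neq_m12; apply/negPn/negP => n12.
have /subsetP M_x := separator_sub_nbhd.
move: (M_x _ m1M) (M_x _ m2M); rewrite !inE => /andP[_ xm1] /andP[_ xm2].
move: m1M m2M; rewrite !inE => /andP[_ /existsP[c1 /andP[c1C c1m1]]].
move=> /andP[_ /existsP[c2 /andP[c2C c2m2]]].
have /connectP[p p_path c2E] : connect (induced D) c1 c2.
  rewrite !inE (sym_connect_sym (@induced_sym D)) in c1C c2C.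
  exact: connect_trans c1C c2C.
apply: (no_detour_between_neighbours neq_m12 n12 xm1 xm2).
apply: (@path_detour _ _ x _ _ _ c1 p); rewrite -?c2E ?(e_sym m1) //.
  by apply: sub_path p_path => u v /and3P[].
apply/allP => z /(path_connect p_path) c1z.
have zC : z \in C by rewrite inE; rewrite inE in c1C; apply: connect_trans c1C c1z.
by move: (subsetP far_component_sub z zC); rewrite in_far => /and3P[_ -> ->].
Qed.

Lemma far_component_separator_sub : C :|: M \subset S :\ x.
Proof.
apply/subsetP => v; rewrite in_setU => /orP[/(subsetP far_component_sub) | vM].
  by rewrite in_far !inE => /and3P[-> -> _].
move: (subsetP separator_sub_nbhd v vM); rewrite !inE => /andP[vS xv].
by rewrite vS andbT; apply: contraTneq xv => ->; rewrite e_irr.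
Qed.

Lemma complete_nbhd_far_component w :
  w \in C -> complete (nbhd (C :|: M) w) -> complete (nbhd S w).
Proof.
move=> wC; apply: complete_sub; apply/subsetP => v vN; rewrite inE.
by rewrite (subsetP (far_component_nbhd wC)) //; move: vN; rewrite inE => /andP[_ ->].
Qed.

End Separator.

Lemma complete_nbhd_universal S x w : {in S :\ x, forall v, e x v} ->
  w \in S :\ x -> complete (nbhd (S :\ x) w) -> complete (nbhd S w).
Proof.
move=> x_univ wSx c_w; apply: complete_sub (complete_setU1 c_w _); last first.
  by move=> v; rewrite inE => /andP[vS _]; apply: x_univ.
apply/subsetP => v; rewrite !inE => /andP[vS wv]; rewrite vS wv !andbT.
by case: eqVneq.
Qed.

(* Dirac's lemma, strengthened so that the simplicial vertex avoids a given clique [K];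
   the strengthening is what makes the induction on [#|S|] go through. *)
Lemma exists_simplicial_outside (S K : {set T}) :
  K \subset S -> complete K -> ~~ (S \subset K) ->
  exists2 w, w \in S :\: K & complete (nbhd S w).
Proof.
elim: {S}_.+1 {-2}S (ltnSn #|S|) K => // n IH S lt_Sn K sKS cK /subsetPn[z zS zNK].
have [x xS xK] : exists2 x, x \in S & K != set0 -> x \in K.
  have [-> | [x xK]] := set_0Vmem K; first by exists z; rewrite ?eqxx.
  by exists x; first exact: (subsetP sKS).
have lt_S'n : #|S :\ x| < n by rewrite (cardsD1 x S) xS in lt_Sn.
have [D0 | [y yD]] := set_0Vmem (S :\: (x |: nbhd S x)).
  have x_univ : {in S :\ x, forall v, e x v}.
    move=> v; rewrite !inE => /andP[vx vS]; apply/negPn/negP => nxv.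
    by have := in_far S x v; rewrite D0 inE vS vx nxv.
  have [sSK | /subsetPn[z' z'S z'NK]] := boolP (S :\ x \subset K).
    have zx : z = x by apply/eqP; apply: contraNT zNK => zx; rewrite (subsetP sSK) // !inE zx.
    exists x; first by rewrite inE -zx zNK zS.
    apply: complete_sub cK; apply: subset_trans sSK; apply/subsetP => v.
    by rewrite !inE => /andP[vS xv]; rewrite vS andbT; apply: contraTneq xv => ->; rewrite e_irr.
  have nsub : ~~ (S :\ x \subset K :\ x).
    by apply/subsetPn; exists z'; rewrite // !inE (negbTE z'NK) andbF.
  have [w] := IH _ lt_S'n _ (setSD _ sKS) (complete_sub (subsetDl K _) cK) nsub.
  rewrite in_setD => /andP[wNK wSx] /(complete_nbhd_universal x_univ wSx) c_w.
  move: wNK wSx; rewrite !in_setD1 => wNK /andP[wx wS].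
  by exists w; rewrite // in_setD wS andbT; rewrite wx in wNK.
pose C := [set v | connect (induced (S :\: (x |: nbhd S x))) y v].
pose M := [set v in S :\: C | [exists c in C, e c v]].
have lt_CMn : #|C :|: M| < n.
  exact: leq_ltn_trans (subset_leq_card (far_component_separator_sub yD)) lt_S'n.
have nsub : ~~ (C :|: M \subset M).
  have yC : y \in C by rewrite inE connect0.
  by apply/subsetPn; exists y; rewrite ?in_setU ?yC // inE in_setD yC.
have [w] := IH _ lt_CMn _ (subsetUr C M) (separator_complete yD) nsub.
rewrite in_setD in_setU => /andP[wNM /orP[wC|]] c_w; last by rewrite (negbTE wNM) in c_w.
move: (subsetP (far_component_sub yD) w wC); rewrite in_far => /and3P[wS wx nxw].
exists w; last exact: complete_nbhd_far_component c_w.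
rewrite in_setD wS andbT; apply: contra nxw => wK.
have xK' : x \in K by apply: xK; apply/set0Pn; exists w.
by apply: cK; rewrite // eq_sym.
Qed.

Lemma connect_induced_out S u v : u \notin S -> connect (induced S) u v = (u == v).
Proof.
move=> uNS; apply/idP/eqP => [/connectP[[|z p] //= /andP[/and3P[uS _ _] _] _] | ->//].
by rewrite uS in uNS.
Qed.

Lemma n_comp_delete_isolated S w : w \in S -> nbhd S w = set0 ->
  n_comp (induced S) S = (n_comp (induced (S :\ w)) (S :\ w)).+1.
Proof.
move=> wS N0.
have nwS v : v \in S -> e w v = false.
  by move=> vS; apply: negbTE; apply/negP => wv; have := in_set0 v; rewrite -N0 inE vS wv.
have same_rel : induced S =2 induced (S :\ w).
  move=> u v; rewrite /induced /= !in_setD1.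
  case: (eqVneq u w) => [-> | _]; first by case: (v \in S) (nwS v) => [->|] //; rewrite !andbF.
  case: (eqVneq v w) => [-> | _] //=; rewrite e_sym.
  by case: (u \in S) (nwS u) => [->|] //; rewrite !andbF.
rewrite (eq_n_comp (eq_connect same_rel)) /n_comp_mem (cardD1 w) inE /= wS andbT.
have root_w : roots (induced (S :\ w)) w.
  apply/eqP; have := connect_root (induced (S :\ w)) w.
  by rewrite connect_induced_out ?setD11 // => /eqP.
by rewrite root_w add1n; congr _.+1; apply: eq_card => v; rewrite !inE andbCA.
Qed.

Lemma nbhd_sub_setD1 S w : nbhd S w \subset S :\ w.
Proof.
apply/subsetP => v; rewrite !inE => /andP[-> wv]; rewrite andbT.
by apply: contraTneq wv => ->; rewrite e_irr.
Qed.

(* Sending [w] to its neighbour [n] maps edges of [S] to connected pairs of [S :\ w]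
   because the neighbourhood of [w] is complete; fingraph's adjunctions do the rest. *)
Lemma n_comp_delete_simplicial S w n : w \in S -> complete (nbhd S w) -> n \in nbhd S w ->
  n_comp (induced S) S = n_comp (induced (S :\ w)) (S :\ w).
Proof.
move=> wS c_w nN; pose h v := if v == w then n else v.
have nbhd_Sw := subsetP (nbhd_sub_setD1 S w).
have nbhd_link u v : u \in nbhd S w -> v \in nbhd S w -> connect (induced (S :\ w)) u v.
  move=> uN vN; have [-> // | neq_uv] := eqVneq u v.
  by apply: connect1; rewrite /induced /= !nbhd_Sw // c_w.
have step u v : induced S u v -> connect (induced (S :\ w)) (h u) (h v).
  rewrite /h; case: (eqVneq u w) => [-> | uw]; case: (eqVneq v w) => [-> | vw];
    move=> /and3P[uS vS e_uv]; first by rewrite e_irr in e_uv.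
  - by apply: nbhd_link; rewrite // inE vS.
  - by apply: nbhd_link; rewrite // inE uS e_sym.
  - by apply: connect1; rewrite /induced /= !in_setD1 uw vw uS vS.
have Sw_closed : closed (induced (S :\ w)) (S :\ w) by move=> a b /and3P[-> ->].
have sym_S A : connect_sym (induced A) := sym_connect_sym (@induced_sym A).
have adj : rel_adjunction h (induced (S :\ w)) (induced S) (S :\ w).
  apply: (intro_adjunction (sym_S S) Sw_closed (fun v _ => v)) => [v | v].
    rewrite in_setD1 => /andP[vw _]; rewrite /h (negbTE vw); split=> // u _ /and3P[vSw uSw e_vu].
    by apply: connect1; rewrite /induced /= e_vu !(subsetP (subD1set S w)).
  move=> _; split=> [|u]; last exact: step.
  by rewrite /h; case: eqVneq => [-> | //]; apply: connect1; move: nN; rewrite /induced /= inE wS.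
rewrite (adjunction_n_comp h (sym_S _) (sym_S _) Sw_closed adj); apply: eq_n_comp_r => v.
rewrite !inE /h; case: (eqVneq v w) => [-> | vw] /=; last by rewrite vw.
by rewrite wS; move: (nbhd_Sw n nN); rewrite !inE.
Qed.

Lemma is_cliqueP I : reflect (I != set0 /\ complete I) (is_clique e I).
Proof.
apply: (iffP andP) => -[-> c_I]; split=> //.
  by move=> u v uI vI; move/forall_inP/(_ u uI)/forall_inP/(_ v vI)/implyP: c_I.
by apply/forall_inP => u uI; apply/forall_inP => v vI; apply/implyP; apply: c_I.
Qed.

Lemma is_clique_setU1 S w J : w \in S -> complete (nbhd S w) -> w \notin J ->
  is_clique e (w |: J) && (w |: J \subset S) = (J \subset nbhd S w).
Proof.
move=> wS c_w wNJ; apply/andP/idP => [[/is_cliqueP[_ c_wJ] sub_wJ] | sub_J].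
  apply/subsetP => v vJ; have wv : w != v by apply: contraNneq wNJ => ->.
  by rewrite inE (subsetP sub_wJ) ?setU1r // c_wJ ?setU11 ?setU1r.
split.
  apply/is_cliqueP; split; first by apply/set0Pn; exists w; rewrite setU11.
  apply: complete_setU1; first exact: complete_sub c_w.
  by move=> v /(subsetP sub_J); rewrite inE => /andP[].
apply/subsetP => v /setU1P[-> // | /(subsetP sub_J)].
by rewrite inE => /andP[].
Qed.

Definition clique_sum_in m S : int :=
  (\sum_(I | is_clique e I && (I \subset S) && (#|I| <= m)%N) (-1) ^+ #|I|.-1)%R.

Lemma clique_sum_in_setD1 m S w : 0 < m -> w \in S -> complete (nbhd S w) ->
  clique_sum_in m S = (clique_sum_in m (S :\ w) +
    \sum_(J : {set T} | (J \subset nbhd S w) && (#|J| <= m.-1)%N) (-1) ^+ #|J|)%R.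
Proof.
move=> m_gt0 wS c_w; rewrite /clique_sum_in (bigID (fun I => w \in I)) /= addrC.
congr (_ + _)%R.
  apply: eq_bigl => I; rewrite subsetD1.
  by rewrite -!andbA; do !bool_congr.
rewrite (reindex_onto (fun J => w |: J) (fun I => I :\ w)) /=; last first.
  by move=> I /andP[_ wI]; apply: setD1K.
have wNnbhd J : J \subset nbhd S w -> w \notin J.
  by move=> /subsetP sub_J; apply/negP => /sub_J; rewrite inE e_irr andbF.
apply: eq_big => J; last by move=> /andP[_ /eqP <-]; rewrite cardsU1 !inE eqxx.
have [wJ | wNJ] := boolP (w \in J).
  rewrite (_ : (w |: J) :\ w == J = false) ?andbF; last first.
    by apply: contraTF wJ => /eqP <-; rewrite setD11.
  by case: (boolP (J \subset _)) => // /wNnbhd; rewrite wJ.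
rewrite setU1K // eqxx setU11 !andbT is_clique_setU1 // cardsU1 wNJ add1n.
by case: (m) m_gt0.
Qed.

Lemma clique_sum_in_set0 m : clique_sum_in m set0 = 0%R.
Proof.
apply: big_pred0 => I; rewrite subset0.
by case: (eqVneq I set0) => [-> | _]; rewrite ?andbF // /is_clique eqxx.
Qed.

Lemma clique_sum_in_le_n_comp m S : 0 < m -> ~~ odd m ->
  (clique_sum_in m S <= n_comp (induced S) S)%R /\
  (#|S| <= m -> clique_sum_in m S = n_comp (induced S) S).
Proof.
move=> m_gt0 m_even; elim: {S}_.+1 {-2}S (ltnSn #|S|) => // n IH S lt_Sn.
have [-> | [z zS]] := set_0Vmem S.
  rewrite clique_sum_in_set0 (_ : n_comp _ _ = 0) //.
  by apply: eq_card0 => v; rewrite !inE andbF.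
have complete0 : complete set0 by move=> u v; rewrite inE.
have S_nsub0 : ~~ (S \subset set0) by apply/subsetPn; exists z; rewrite ?inE.
have [w] := exists_simplicial_outside (sub0set S) complete0 S_nsub0.
rewrite setD0 => wS c_w.
have card_S : #|S| = #|S :\ w|.+1 by rewrite (cardsD1 w S) wS.
have [IH_le IH_eq] : (clique_sum_in m (S :\ w) <= n_comp (induced (S :\ w)) (S :\ w))%R /\
    (#|S :\ w| <= m -> clique_sum_in m (S :\ w) = n_comp (induced (S :\ w)) (S :\ w)).
  by apply: IH; rewrite card_S in lt_Sn.
rewrite (clique_sum_in_setD1 m_gt0 wS c_w) sum_sign_subsets_leq.
have [N0 | [v vN]] := set_0Vmem (nbhd S w).
  rewrite (n_comp_delete_isolated wS N0) N0 cards0 big_ord_recl big1 => [|j _]; last first.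
    by rewrite bin0n.
  rewrite expr0 addr0 bin0 intS (addrC 1%R); split; first by rewrite lerD2r.
  by move=> le_Sm; rewrite IH_eq //; rewrite card_S in le_Sm; lia.
rewrite (n_comp_delete_simplicial wS c_w vN).
have [d card_N] : exists d, #|nbhd S w| = d.+1.
  by exists #|nbhd S w|.-1; rewrite prednK //; apply/card_gt0P; exists v.
have odd_m1 : odd m.-1 by move: m_even; rewrite -(prednK m_gt0) /= negbK.
rewrite card_N alternating_binomial_partial_sum -signr_odd odd_m1 expr1 mulNrn.
split; first by apply: ler_wnDr => //; rewrite oppr_le0 mulrn_wge0.
move=> le_Sm; have le_N := subset_leq_card (nbhd_sub_setD1 S w).
rewrite card_S in le_Sm; rewrite card_N in le_N.
by rewrite bin_small ?oppr0 ?addr0 ?IH_eq //; lia.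
Qed.

End Graph.

Theorem proposition2 (T : finType) (e : rel T)
  (e_sym : symmetric e) (e_irr : irreflexive e) (e_chordal : chordal e)
  (r : nat) (hr : 1 <= r) :
  (clique_sum e (2 * r) <= Posz (ncomp e))%R /\
  (#|T| <= 2 * r -> clique_sum e (2 * r) = Posz (ncomp e)).
Proof.
have sumE : clique_sum e (2 * r) = clique_sum_in e (2 * r) [set: T].
  by apply: eq_bigl => I; rewrite subsetT andbT.
have compE : n_comp (induced e [set: T]) [set: T] = ncomp e.
  rewrite /ncomp -(eq_n_comp_r (a := [set: T])) => [|v]; last by rewrite inE.
  by apply: eq_n_comp; apply: eq_connect => u v; rewrite /induced /= !inE.
have m_gt0 : 0 < 2 * r by lia.
have m_even : ~~ odd (2 * r) by rewrite oddM.
have [] := clique_sum_in_le_n_comp e_sym e_irr e_chordal [set: T] m_gt0 m_even.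
rewrite sumE compE => le_comp eq_comp; split=> // le_T.
by apply: eq_comp; rewrite cardsT.
Qed.
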